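(* Let $S$ be a finitely generated semigroup and let $S_+$ denote the set of non-invertible elements of $S$. Let $T=\bigcup_{i=1}^kS\bullet t_i$ be a finitely generated $S$-module such that $s\bullet t=t$ (with $s\in S$, $t\in T$) occurs only when $s$ is a unit of $S$. Then the set $T_{\mathrm{prim}}:=T\smallsetminus(S_+\bullet T)$ is finite and generates $T$ over $S$.
   Context: Semigroups are commutative monoids (written additively, with identity $0$) that are subsemigroups of finitely generated abelian groups such that their image in the torsion-free quotient of the ambient group is pointed (has no nonzero units). An $S$-module is a set $T$ with an action $\bullet\colon S\times T\to T$ satisfying $(s+s')\bullet t=s\bullet(s'\bullet t)$ and $0\bullet t=t$. $T$ is finitely generated over $S$ if $T=\bigcup_{i=1}^kS\bullet t_i$ for finitely many $t_i\in T$; a subset generates $T$ if $T$ is the union of the orbits $S\bullet t$ over its elements. $S_+\bullet T=\{s\bullet t\mid s\in S_+, t\in T\}$. *)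

From mathcomp Require Import all_boot all_order all_algebra.
From Stdlib Require List.
Set Implicit Arguments. Unset Strict Implicit. Unset Printing Implicit Defensive.
Import GRing.Theory.
Local Open Scope ring_scope.

Definition fg_abgroup (G : zmodType) : Prop :=
  exists gens : seq G, forall g : G,
    exists c : nat -> int, g = \sum_(i < size gens) gens`_i *~ c i.

Definition torsion (G : zmodType) (x : G) : Prop :=
  exists n : nat, (0 < n)%N /\ x *+ n = 0.

Definition submonoid (G : zmodType) (S : G -> Prop) : Prop :=
  S 0 /\ forall x y, S x -> S y -> S (x + y).

(* The image of S in the torsion-free quotient G / tors(G) is pointed:
   if [x] + [y] = 0 with x, y in S, then [x] = 0. *)
Definition pointed_mod_torsion (G : zmodType) (S : G -> Prop) : Prop :=
  forall x y, S x -> S y -> torsion (x + y) -> torsion x.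

Definition is_semigroup (G : zmodType) (S : G -> Prop) : Prop :=
  fg_abgroup G /\ submonoid S /\ pointed_mod_torsion S.

Definition fg_semigroup (G : zmodType) (S : G -> Prop) : Prop :=
  exists gens : seq G, (forall i, (i < size gens)%N -> S gens`_i) /\
    forall s, S s -> exists c : nat -> nat, s = \sum_(i < size gens) gens`_i *+ c i.

Definition unit_of (G : zmodType) (S : G -> Prop) (s : G) : Prop :=
  S s /\ exists s', S s' /\ s + s' = 0.

Definition S_plus (G : zmodType) (S : G -> Prop) (s : G) : Prop :=
  S s /\ ~ unit_of S s.

(* an S-module structure on T given by act (only its values on S matter) *)
Definition is_module (G : zmodType) (S : G -> Prop) (T : Type)
    (act : G -> T -> T) : Prop :=
  (forall s s' t, S s -> S s' -> act (s + s') t = act s (act s' t)) /\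
  (forall t, act 0 t = t).

Definition generates (G : zmodType) (S : G -> Prop) (T : Type)
    (act : G -> T -> T) (P : T -> Prop) : Prop :=
  forall t, exists p s, P p /\ S s /\ t = act s p.

Definition fg_module (G : zmodType) (S : G -> Prop) (T : Type)
    (act : G -> T -> T) : Prop :=
  exists ts : seq T, generates S act (fun t => Stdlib.Lists.List.In t ts).

Definition T_prim (G : zmodType) (S : G -> Prop) (T : Type)
    (act : G -> T -> T) (t : T) : Prop :=
  ~ exists s t', S_plus S s /\ t = act s t'.

Definition finite_set (T : Type) (P : T -> Prop) : Prop :=
  exists l : seq T, forall t, P t -> Stdlib.Lists.List.In t l.

From mathcomp Require Import all_boot all_order all_algebra.
From Stdlib Require List.
From Stdlib Require Import Classical.
Set Implicit Arguments. Unset Strict Implicit. Unset Printing Implicit Defensive.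
Import GRing.Theory.
Local Open Scope ring_scope.

(* Units of S are torsion (S is pointed modulo torsion), and a generator
   occurring in a unit is itself a unit; hence units are the sums
   [\sum_i g_i *+ d_i] with every [d_i] below a common exponent of the
   torsion generators, a finite set.  A primitive element [s . t_i] needs [s]
   to be a unit, so [T_prim] is finite.  For generation, the relation
   "[a] lies in [S_+ . b]" is transitive and, because only units fix points,
   irreflexive; following it upwards from any [a] through the finitely many
   generators ends at an element with no generator above it, which is
   primitive. *)

Lemma mem_In (T : eqType) (x : T) (s : seq T) : x \in s -> List.In x s.
Proof.
by elim: s => [//|y s IHs]; rewrite inE => /orP[/eqP ->|/IHs]; [left | right].
Qed.

Lemma finite_set_subset (T : Type) (P Q : T -> Prop) :
  finite_set P -> (forall x, Q x -> P x) -> finite_set Q.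
Proof. by move=> [l Pl] QP; exists l => x /QP /Pl. Qed.

Lemma finite_set_image (I : finType) (T : eqType) (f : I -> T) :
  finite_set (fun x => exists i, x = f i).
Proof.
exists [seq f i | i <- enum I] => _ [i ->].
by apply: mem_In; apply: map_f; rewrite mem_enum.
Qed.

Lemma finite_set_image2 (A B C : Type) (f : A -> B -> C) (P : A -> Prop)
    (Q : B -> Prop) : finite_set P -> finite_set Q ->
  finite_set (fun z => exists x y, P x /\ Q y /\ z = f x y).
Proof.
move=> [lP HP] [lQ HQ].
exists (List.flat_map (fun x => List.map (f x) lQ) lP) => _ [x [y [Px [Qy ->]]]].
by apply/List.in_flat_map; exists x; split; [apply: HP | apply/List.in_map/HQ].
Qed.

Lemma exists_maximal_above (A : Type) (R : A -> A -> Prop) (l : list A) :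
    (forall x y z, R x y -> R y z -> R x z) -> (forall x, ~ R x x) ->
  forall x, exists y, (x = y \/ R x y) /\ forall z, List.In z l -> ~ R y z.
Proof.
move=> R_trans R_irr; elim: l => [|c l IHl] x; first by exists x; split; [left|].
have [y [xy y_max]] := IHl x.
have [Ryc | nRyc] := classic (R y c); last first.
  by exists y; split=> // z [<- //|]; apply: y_max.
(* [y] lies below [c], so climb from [c] instead. *)
have [y' [cy' y'_max]] := IHl c.
have Rxc : R x c by case: xy => [-> //|Rxy]; apply: R_trans Rxy Ryc.
exists y'; split.
  by right; case: cy' => [<- //|]; apply: R_trans.
move=> z [<-|]; last exact: y'_max.
by case: cy' => [<-|Rcy' Ry'c]; [apply: R_irr | apply: (R_irr c); apply: R_trans Ry'c].
Qed.

Lemma mulrn_modn (G : zmodType) (x : G) (N n : nat) :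
  x *+ N = 0 -> x *+ n = x *+ (n %% N).
Proof.
by move=> xN0; rewrite {1}(divn_eq n N) mulrnDr mulnC mulrnA xN0 mul0rn add0r.
Qed.

Lemma torsion_common_exponent (G : zmodType) (gs : seq G) :
  exists N, (0 < N)%N /\ forall g, g \in gs -> torsion g -> g *+ N = 0.
Proof.
elim: gs => [|g gs [N [N_gt0 HN]]]; first by exists 1%N.
have [[n [n_gt0 gn0]] | g_ntor] := classic (torsion g); last first.
  exists N; split=> // h; rewrite inE => /orP[/eqP -> //|]; exact: HN.
exists (N * n)%N; split; first by rewrite muln_gt0 N_gt0.
move=> h; rewrite inE => /orP[/eqP ->|hgs htor].
  by rewrite mulnC mulrnA gn0 mul0rn.
by rewrite mulrnA HN // mul0rn.
Qed.

Section Units.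

Variables (G : zmodType) (S : G -> Prop).
Hypothesis S_submonoid : submonoid S.

Lemma submonoid_muln (x : G) (n : nat) : S x -> S (x *+ n).
Proof.
have [S0 SD] := S_submonoid; move=> Sx.
by elim: n => [|n IHn]; [rewrite mulr0n | rewrite mulrS; apply: SD].
Qed.

Lemma submonoid_sum (I : Type) (r : seq I) (P : pred I) (F : I -> G) :
  (forall i, P i -> S (F i)) -> S (\sum_(i <- r | P i) F i).
Proof. by have [S0 SD] := S_submonoid; move=> SF; apply: big_ind. Qed.

Lemma S_plus_addr (a b : G) : S_plus S a -> S b -> S_plus S (a + b).
Proof.
have [_ SD] := S_submonoid; move=> [Sa a_nunit] Sb; split; first exact: SD.
move=> [_ [w [Sw abw0]]]; apply: a_nunit; split=> //.
by exists (b + w); split; [apply: SD | rewrite addrA].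
Qed.

Lemma unit_of_addl (a b : G) : S a -> S b -> unit_of S (a + b) -> unit_of S a.
Proof.
have [_ SD] := S_submonoid; move=> Sa Sb [_ [w [Sw abw0]]]; split=> //.
by exists (b + w); split; [apply: SD | rewrite addrA].
Qed.

Lemma unit_of_torsion (u : G) :
  pointed_mod_torsion S -> unit_of S u -> torsion u.
Proof.
move=> S_pointed [Su [u' [Su' uu'0]]]; apply: (S_pointed u u') => //.
by exists 1%N; rewrite uu'0.
Qed.

Lemma unit_of_sum_term (m : nat) (g : nat -> G) (c : nat -> nat) (i : 'I_m) :
    (forall j, (j < m)%N -> S (g j)) ->
    unit_of S (\sum_(j < m) g j *+ c j) -> (0 < c i)%N -> unit_of S (g i).
Proof.
move=> Sg u_unit ci_gt0; have Sgi := Sg i (ltn_ord i).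
have Srest : S (g i *+ (c i).-1 + \sum_(j < m | j != i) g j *+ c j).
  have [_ SD] := S_submonoid; apply: SD; first exact: submonoid_muln.
  by apply: submonoid_sum => j _; apply/submonoid_muln/Sg.
apply: unit_of_addl Sgi Srest _.
have <- // : \sum_(j < m) g j *+ c j =
    g i + (g i *+ (c i).-1 + \sum_(j < m | j != i) g j *+ c j).
by rewrite addrA -mulrS prednK // (bigD1 i).
Qed.

Lemma units_finite :
  pointed_mod_torsion S -> fg_semigroup S -> finite_set (unit_of S).
Proof.
move=> S_pointed [gens [Sgens gens_span]]; set m := size gens.
have [N [N_gt0 HN]] := torsion_common_exponent gens.
apply: finite_set_subset
  (finite_set_image (fun d : {ffun 'I_m -> 'I_N} =>
     \sum_(i < m) gens`_i *+ d i)) _.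
move=> u u_unit; have [c u_def] := gens_span u (proj1 u_unit).
exists [ffun i : 'I_m => Ordinal (ltn_pmod (c i) N_gt0)].
rewrite u_def; apply: eq_bigr => i _; rewrite ffunE /=.
have [-> | ci_gt0] := posnP (c i); first by rewrite mod0n.
apply/mulrn_modn/HN; first by rewrite mem_nth.
apply: unit_of_torsion S_pointed _.
by apply: unit_of_sum_term ci_gt0; rewrite -?u_def.
Qed.

End Units.

Section Module.

Variables (G : zmodType) (S : G -> Prop) (T : Type) (act : G -> T -> T).
Hypothesis S_submonoid : submonoid S.
Hypothesis actD :
  forall s s' t, S s -> S s' -> act (s + s') t = act s (act s' t).
Hypothesis act0 : forall t, act 0 t = t.
Hypothesis fixed_unit : forall s t, S s -> act s t = t -> unit_of S s.

Definition in_Splus_orbit (a b : T) : Prop :=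
  exists s, S_plus S s /\ a = act s b.

Lemma in_Splus_orbit_trans (a b c : T) :
  in_Splus_orbit a b -> in_Splus_orbit b c -> in_Splus_orbit a c.
Proof.
move=> [s [s_plus ->]] [s' [s'_plus ->]]; exists (s + s'); split.
  by apply: S_plus_addr => //; case: s'_plus.
by rewrite actD //; [case: s_plus | case: s'_plus].
Qed.

Lemma in_Splus_orbit_irrefl (a : T) : ~ in_Splus_orbit a a.
Proof.
move=> [s [[Ss s_nunit] a_fix]]; exact: s_nunit (fixed_unit Ss (esym a_fix)).
Qed.

Lemma T_prim_no_generator_above (P : T -> Prop) (a : T) :
    generates S act P -> (forall p, P p -> ~ in_Splus_orbit a p) ->
  T_prim S act a.
Proof.
move=> P_gen a_max [s [t [s_plus a_def]]]; have [p [s' [Pp [Ss' t_def]]]] := P_gen t.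
apply: (a_max p Pp); exists (s + s'); split.
  by apply: S_plus_addr.
by rewrite actD -?t_def //; case: s_plus.
Qed.

Lemma T_prim_unit_generator (P : T -> Prop) (t : T) :
    generates S act P -> T_prim S act t ->
  exists u p, unit_of S u /\ P p /\ t = act u p.
Proof.
move=> P_gen t_prim; have [p [s [Pp [Ss t_def]]]] := P_gen t.
exists s, p; split=> //; apply: NNPP => s_nunit.
by apply: t_prim; exists s, p.
Qed.

End Module.

Theorem lemma4p2 (G : zmodType) (S : G -> Prop) (T : Type) (act : G -> T -> T) :
  is_semigroup S -> fg_semigroup S ->
  is_module S act -> fg_module S act ->
  (forall s t, S s -> act s t = t -> unit_of S s) ->
  finite_set (T_prim S act) /\ generates S act (T_prim S act).
Proof.
move=> [_ [S_submonoid S_pointed]] S_fg [actD act0] [ts ts_gen] fixed_unit.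
split.
  apply: finite_set_subset (finite_set_image2 act (units_finite S_submonoid
    S_pointed S_fg) (ex_intro _ ts (fun t => id))) _.
  by move=> t; apply: T_prim_unit_generator ts_gen.
move=> a.
have [b [ab b_max]] := exists_maximal_above ts
  (@in_Splus_orbit_trans _ _ _ _ S_submonoid actD)
  (in_Splus_orbit_irrefl fixed_unit) a.
have b_prim := T_prim_no_generator_above S_submonoid actD ts_gen b_max.
case: ab => [->|[s [[Ss _] ->]]]; last by exists b, s.
by exists b, 0; rewrite act0; split=> //; case: S_submonoid.
Qed.
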